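(* Let $K$ be a number field, $X/K$ a smooth projective variety with $\dim X\ge1$, and $f:X\to X$ a morphism defined over $K$. Suppose that (i) $X_f^{\mathrm{dense}}(K)\ne\emptyset$; (ii) every complete set of representatives for $X(K)/\equiv_f$ is Zariski dense in $X$; and (iii) $X_f^{\mathrm{dense}}$ contains a non-empty Zariski open subset of $X$. Then $X_f^{\mathrm{dense}}(K)\ne\emptyset$ and every complete set of representatives for $X_f^{\mathrm{dense}}(K)/\equiv_f$ is Zariski dense in $X$.
   Context: $\mathcal{O}_f(P)=\{f^n(P):n\ge 0\}$. $P\equiv_f Q$ means $\mathcal{O}_f(P)\cap\mathcal{O}_f(Q)\ne\emptyset$ (an equivalence relation). $X_f^{\mathrm{dense}}$ is the set of points with Zariski dense $f$-orbit and $X_f^{\mathrm{dense}}(K)=X_f^{\mathrm{dense}}\cap X(K)$. For $S\subseteq X(K)$, a complete set of representatives for $S/\equiv_f$ is a subset of $S$ containing exactly one point of each $\equiv_f$-class that meets $S$. *)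

(* Classical (Hartshorne ch. I style) projective varieties
   over algC (= an algebraic closure of Q), with Zariski topology given by
   homogeneous multivariate polynomials (multinomials' mpoly). *)
From HB Require Import structures.
From mathcomp Require Import all_boot all_order all_algebra all_field.
From mathcomp Require Import mpoly.

Set Implicit Arguments.
Unset Strict Implicit.
Unset Printing Implicit Defensive.

Import Order.TTheory GRing.Theory Num.Theory.
Local Open Scope ring_scope.

Definition is_number_field (K : algC -> Prop) : Prop :=
  [/\ K 0, K 1,
      (forall x y, K x -> K y -> K (x - y)),
      (forall x y, K x -> K y -> K (x * y)) &
      (forall x, K x -> x != 0 -> K x^-1)] /\
      (exists s : seq algC, forall x, K x ->
        exists c : 'I_(size s) -> rat, x = \sum_(i < size s) ratr (c i) * s`_i).

(* a point of P^N is represented by its unique normalized homogeneous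
   coordinate vector: first nonzero coordinate equal to 1 *)
Definition normalized (N : nat) (v : {ffun 'I_N.+1 -> algC}) : bool :=
  [exists i, (v i == 1) && [forall j : 'I_N.+1, (j < i)%N ==> (v j == 0)]].

Definition proj (N : nat) := {v : {ffun 'I_N.+1 -> algC} | normalized v}.

Definition coords (N : nat) (P : proj N) : 'I_N.+1 -> algC := fun i => (val P) i.

Definition hpoly (N : nat) (p : {mpoly algC[N.+1]}) : Prop :=
  exists d : nat, p \is d.-homog.

Definition rational_pt (K : algC -> Prop) (N : nat) (P : proj N) : Prop :=
  forall i, K (coords P i).

Definition zclosed (N : nat) (Z : proj N -> Prop) : Prop :=
  exists S : {mpoly algC[N.+1]} -> Prop,
    (forall p, S p -> hpoly p) /\
    (forall P, Z P <-> (forall p, S p -> (p.@[coords P]) = 0)).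

Definition zclosed_over (K : algC -> Prop) (N : nat) (Z : proj N -> Prop) : Prop :=
  exists S : {mpoly algC[N.+1]} -> Prop,
    (forall p, S p -> hpoly p /\ forall m, K (p@_m)) /\
    (forall P, Z P <-> (forall p, S p -> (p.@[coords P]) = 0)).

Definition subset_of (N : nat) (A B : proj N -> Prop) : Prop :=
  forall P, A P -> B P.

Definition open_in (N : nat) (X U : proj N -> Prop) : Prop :=
  subset_of U X /\
  exists Z, zclosed Z /\ forall P, U P <-> (X P /\ ~ Z P).

Definition zdense_in (N : nat) (X S : proj N -> Prop) : Prop :=
  subset_of S X /\
  forall Z, zclosed Z -> subset_of S Z -> subset_of X Z.

Definition irreducible_closed (N : nat) (X : proj N -> Prop) : Prop :=
  [/\ zclosed X, exists P, X P &
      forall Z1 Z2, zclosed Z1 -> zclosed Z2 ->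
        (forall P, X P -> Z1 P \/ Z2 P) -> subset_of X Z1 \/ subset_of X Z2].

Definition irr_chain (N : nat) (X : proj N -> Prop) (d : nat)
    (Z : nat -> proj N -> Prop) : Prop :=
  (forall k, (k <= d)%N -> irreducible_closed (Z k) /\ subset_of (Z k) X) /\
  (forall k, (k < d)%N ->
     subset_of (Z k) (Z k.+1) /\ ~ subset_of (Z k.+1) (Z k)).

Definition dim_eq (N : nat) (X : proj N -> Prop) (d : nat) : Prop :=
  (exists Z, irr_chain X d Z) /\ (forall Z, ~ irr_chain X d.+1 Z).

Definition in_ideal (N : nat) (X : proj N -> Prop) (p : {mpoly algC[N.+1]}) : Prop :=
  hpoly p /\ forall P, X P -> p.@[coords P] = 0.

Definition jacobian (N k : nat) (ps : 'I_k -> {mpoly algC[N.+1]}) (P : proj N)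
  : 'M[algC]_(k, N.+1) :=
  \matrix_(i < k, j < N.+1) ((ps i)^`M(j)).@[coords P].

(* Jacobian criterion: at every point the gradients of the homogeneous
   ideal span a space of dimension exactly N - dim X *)
Definition smooth (N : nat) (X : proj N -> Prop) : Prop :=
  exists d, dim_eq X d /\
  forall P, X P ->
    (exists k (ps : 'I_k -> {mpoly algC[N.+1]}),
        (forall i, in_ideal X (ps i)) /\ (N - d <= \rank (jacobian ps P))%N) /\
    (forall k (ps : 'I_k -> {mpoly algC[N.+1]}),
        (forall i, in_ideal X (ps i)) -> (\rank (jacobian ps P) <= N - d)%N).

Definition smooth_proj_variety (K : algC -> Prop) (N : nat) (X : proj N -> Prop)
  : Prop :=
  [/\ zclosed_over K X, irreducible_closed X & smooth X].

Definition dim_ge1 (N : nat) (X : proj N -> Prop) : Prop :=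
  exists Z, irr_chain X 1 Z.

Definition morphism_over (K : algC -> Prop) (N : nat) (X : proj N -> Prop)
    (f : proj N -> proj N) : Prop :=
  (forall P, X P -> X (f P)) /\
  forall P, X P ->
    exists (d : nat) (F : 'I_N.+1 -> {mpoly algC[N.+1]}) (V : proj N -> Prop),
      [/\ (forall i, F i \is d.-homog /\ forall m, K ((F i)@_m)),
          open_in X V, V P &
          forall Q, V Q -> exists2 c : algC, c != 0 &
            forall i, (F i).@[coords Q] = c * coords (f Q) i].

Definition orbit (N : nat) (f : proj N -> proj N) (P : proj N) : proj N -> Prop :=
  fun Q => exists n, Q = iter n f P.

Definition orb_equiv (N : nat) (f : proj N -> proj N) (P Q : proj N) : Prop :=
  exists m n, iter m f P = iter n f Q.

Definition Xdense (N : nat) (X : proj N -> Prop) (f : proj N -> proj N) : proj N -> Prop :=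
  fun P => X P /\ zdense_in X (orbit f P).

Definition complete_reps (N : nat) (f : proj N -> proj N) (S R : proj N -> Prop) : Prop :=
  [/\ subset_of R S,
      (forall P, S P -> exists Q, R Q /\ orb_equiv f Q P) &
      (forall Q1 Q2, R Q1 -> R Q2 -> orb_equiv f Q1 Q2 -> Q1 = Q2)].

From mathcomp Require Import all_boot all_order all_algebra all_field.
From mathcomp Require Import mpoly.
From Stdlib Require Import Classical ClassicalEpsilon FunctionalExtensionality PropExtensionality.

(* Extend a complete set of representatives R of the dense K-points to one of
   all K-points of X by adding one K-point from each class that contains no
   dense K-point.  By (ii) the enlarged set is dense.  The added points avoid
   the nonempty open set U of (iii), because U consists of dense points; so in
   the irreducible X the closure of R and the complement of U cover X, which
   forces R to be dense. *)

Import GRing.Theory.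
Local Open Scope ring_scope.

Lemma zclosedU (N : nat) (Z1 Z2 : proj N -> Prop) :
  zclosed Z1 -> zclosed Z2 -> zclosed (fun P => Z1 P \/ Z2 P).
Proof.
move=> [S1 [hom1 E1]] [S2 [hom2 E2]].
exists (fun r => exists p q, [/\ S1 p, S2 q & r = p * q]); split.
  move=> _ [p [q [S1p S2q ->]]].
  have [d homp] := hom1 p S1p; have [e homq] := hom2 q S2q.
  by exists (d + e)%N; apply: dhomogM.
move=> P; split.
  move=> [Z1P|Z2P] _ [p [q [S1p S2q ->]]]; rewrite mevalM.
    by rewrite (proj1 (E1 P) Z1P p S1p) mul0r.
  by rewrite (proj1 (E2 P) Z2P q S2q) mulr0.
move=> vanish; case: (classic (Z1 P)) => [|notZ1P]; first by left.
right; apply/(E2 P) => q S2q.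
have [p [S1p nzp]] : exists p, S1 p /\ p.@[coords P] <> 0.
  apply: NNPP => none; apply: notZ1P; apply/(E1 P) => p S1p.
  by apply: NNPP => nzp; apply: none; exists p.
have /eqP := vanish (p * q) (ex_intro _ p (ex_intro _ q (And3 S1p S2q erefl))).
by rewrite mevalM mulf_eq0 => /orP [/eqP|/eqP].
Qed.

Lemma proj_inhabited (N : nat) : inhabited (proj N).
Proof.
constructor; exists [ffun i => if i == ord0 then 1 else 0].
by apply/existsP; exists ord0; rewrite ffunE !eqxx; apply/forallP.
Qed.

Section OrbitEquivalence.
Context {N : nat} {f : proj N -> proj N}.

Lemma orb_equiv_refl {P : proj N} : orb_equiv f P P.
Proof. by exists 0%N, 0%N. Qed.

Lemma orb_equiv_sym {P Q : proj N} : orb_equiv f P Q -> orb_equiv f Q P.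
Proof. by move=> [m [n e]]; exists n, m. Qed.

Lemma orb_equiv_trans {P Q T : proj N} :
  orb_equiv f P Q -> orb_equiv f Q T -> orb_equiv f P T.
Proof.
move=> [a [b e1]] [c [d e2]]; exists (c + a)%N, (b + d)%N.
by rewrite !iterD e1 -iterD addnC iterD e2 -iterD addnC.
Qed.

Lemma orb_equiv_class_choice (T : proj N -> Prop) :
  exists rep : proj N -> proj N,
    (forall P, T P -> T (rep P) /\ orb_equiv f (rep P) P) /\
    (forall P Q, orb_equiv f P Q -> rep P = rep Q).
Proof.
pose cls P Q := T Q /\ orb_equiv f Q P.
exists (fun P => epsilon (proj_inhabited N) (cls P)); split.
  move=> P TP; apply: (epsilon_spec _ (cls P)).
  by exists P; split; last exact: orb_equiv_refl.
move=> P Q ePQ; congr epsilon; apply: functional_extensionality => Z.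
apply: propositional_extensionality; split=> -[TZ eZ]; split=> //.
  exact: orb_equiv_trans eZ ePQ.
exact: orb_equiv_trans eZ (orb_equiv_sym ePQ).
Qed.

Lemma complete_reps_extend {S T R : proj N -> Prop} :
  subset_of S T -> complete_reps f S R ->
  exists R', complete_reps f T R' /\
    forall P, R' P -> R P \/ forall Q, S Q -> ~ orb_equiv f Q P.
Proof.
move=> sST [sRS coverR uniqR].
have [rep [rep_cls rep_equiv]] := orb_equiv_class_choice T.
pose meetsS P := exists Q, S Q /\ orb_equiv f Q P.
pose R' P := R P \/ [/\ T P, ~ meetsS P & P = rep P].
exists R'; split; first split.
- by move=> P [/sRS/sST|[]].
- move=> P TP; case: (classic (meetsS P)) => [[Q [SQ eQP]]|noS].
    have [Z [RZ eZQ]] := coverR Q SQ.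
    by exists Z; split; [left|exact: orb_equiv_trans eZQ eQP].
  have [TrP erP] := rep_cls P TP.
  exists (rep P); split=> //; right; split=> //.
    move=> [Q [SQ eQ]]; apply: noS.
    by exists Q; split=> //; apply: orb_equiv_trans eQ erP.
  by rewrite (rep_equiv _ _ erP).
- move=> Q1 Q2 [R1|[_ noS1 fix1]] [R2|[_ noS2 fix2]] e12.
  + exact: uniqR.
  + by exfalso; apply: noS2; exists Q1; split; first exact: sRS.
  + by exfalso; apply: noS1; exists Q2; split; [exact: sRS|exact: orb_equiv_sym].
  + by rewrite fix1 fix2 (rep_equiv _ _ e12).
move=> P [RP|[_ noS _]]; first by left.
by right=> Q SQ eQP; apply: noS; exists Q.
Qed.

End OrbitEquivalence.

Lemma zdense_in_irreducible_trace {N : nat} {X U A D : proj N -> Prop} :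
  irreducible_closed X -> open_in X U -> (exists P, U P) ->
  subset_of A X -> zdense_in X D -> (forall P, D P -> U P -> A P) ->
  zdense_in X A.
Proof.
move=> [_ _ irrX] [sUX [ZU [closedZU defU]]] [P0 UP0] sAX [sDX denseD] DUA.
split=> // Z closedZ sAZ.
have sXZU : subset_of X (fun P => Z P \/ ZU P).
  apply: denseD; first exact: zclosedU.
  move=> P DP; case: (classic (U P)) => [UP|notUP]; first by left; apply: sAZ; apply: DUA.
  by right; apply: NNPP => notZU; apply: notUP; apply/defU; split; first exact: sDX.
case: (irrX _ _ closedZ closedZU sXZU) => // sXZU'.
by case: (proj1 (defU P0) UP0) => XP0; case; apply: sXZU'.
Qed.

Theorem lemmaB3 (K : algC -> Prop) (N : nat) (X : proj N -> Prop)
    (f : proj N -> proj N) :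
  is_number_field K ->
  smooth_proj_variety K X ->
  dim_ge1 X ->
  morphism_over K X f ->
  (* (i) *) (exists P, Xdense X f P /\ rational_pt K P) ->
  (* (ii) *) (forall R, complete_reps f (fun P => X P /\ rational_pt K P) R ->
                zdense_in X R) ->
  (* (iii) *) (exists U, open_in X U /\ (exists P, U P) /\ subset_of U (Xdense X f)) ->
  (exists P, Xdense X f P /\ rational_pt K P) /\
  (forall R, complete_reps f (fun P => Xdense X f P /\ rational_pt K P) R ->
     zdense_in X R).
Proof.
move=> _ [_ irrX _] _ _ denseK repsK_dense [U [openU [neU sUdense]]].
split=> // R repsR.
have sDK : subset_of (fun P => Xdense X f P /\ rational_pt K P)
                     (fun P => X P /\ rational_pt K P).
  by move=> P [[XP _] KP].
have [R' [repsR' newR']] := complete_reps_extend sDK repsR.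
have [sR'K _ _] := repsR'.
have sRX : subset_of R X by case: repsR => sR _ _ P /sR [[]].
apply: (zdense_in_irreducible_trace irrX openU neU sRX (repsK_dense R' repsR')).
move=> P R'P UP; case: (newR' P R'P) => // noDense; exfalso.
have [XP KP] := sR'K P R'P.
by apply: (noDense P); [split=> //; apply: sUdense|apply: orb_equiv_refl].
Qed.
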